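(* Consider the real-power model with gap $\Delta>0$ and the hybrid RMPE algorithm described in the context. Let $\epsilon>0$, $\rho\in(0,1)$. Let $\tilde\Delta\in(0,\frac{1}{8S(2S-1)})$, $\tilde M:=\tilde\Delta/\Delta$, let $K_2>4/\tilde\Delta$ be an even integer, $C\in(2,\frac{K_2\tilde\Delta}{2})$, and $$A=\frac{80S^2}{\beta}\sqrt{\frac{C^3(2+K_2)}{(C-1)^3K_2}}\left(1-\frac{2CS}{(C-1)K_2}\right)^{-1};$$ let $\eta$ satisfy $A\omega<\eta<\frac{1}{8S(2S-1)}$. Let $\tau=\frac1\pi\log\frac{12}{\beta-\omega}$, $\alpha_1=\frac{\beta-\omega}{3}$, $K_1=\lceil3\eta^{-1}\tau\rceil$, let $\alpha_2>0$ satisfy $\alpha_2<\min\{\frac{C\beta}{8(C-1)\sqrt{2S}}\sqrt{1-\frac{2(C-1)S}{CK_2}},\frac{\eta}{A}\}-\omega$, and for $j=1,2$ let $N_{\mathrm{HR},j}=2\left\lceil\frac{4}{\alpha_j^2}\left(\log\frac4\rho+\log\left(\left\lceil\log_2\frac{\eta}{\epsilon}\right\rceil+1\right)+\log(K_j+1)\right)\right\rceil$. Then the maximal runtime of the algorithm is $$T_{\max}=O\left(\max\left\{\log\left(\tfrac1\beta\right)\eta^{-1}\tilde\Delta\Delta^{-1},\ \eta\tilde\Delta^{-1}\epsilon^{-1}\right\}\right)$$ and the total runtime is $T_{\mathrm{total}}=\tilde O\left(\eta^{-2}\beta^{-2}\tilde\Delta\Delta^{-1}+\eta\omega^{-2}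\tilde\Delta^{-2}\epsilon^{-1}\right)$.
   Context: Real-power model: $H$ Hermitian with eigenvalues in $[0,1]$; controlled-$U^t$, $U^t:=e^{-2\pi iHt}$, available for every real $t\ge0$ at cost $t$. Initial state $|\psi\rangle=\sum_{s=1}^Sc_s|\psi_s\rangle+c_{\mathrm{res}}|\psi_{\mathrm{res}}\rangle$, $|\psi_s\rangle$ orthonormal, $H|\psi_s\rangle=\lambda_s|\psi_s\rangle$, $|\psi_{\mathrm{res}}\rangle$ a unit vector orthogonal to all $|\psi_s\rangle$, $\min_s|c_s|^2\ge\beta>0$, $|c_{\mathrm{res}}|^2\le\omega<\beta$; $\Lambda=\{\lambda_1,\dots,\lambda_S\}\subset[0,0.9]$ (assumed). Gap $\Delta=\min_{s\ne s'}\min_{n\in\mathbb{Z}}|\lambda_s-\lambda_{s'}-n|$. $\tilde O$ hides polylogarithmic factors. Notation: $\mathbb{T}=\mathbb{R}/\mathbb{Z}$; $B(T,r)=\bigcup_{x\in T}[x-r,x+r]$; $B_{\mathbb{T}}$ the analogue modulo 1. Hadamard test: one run with time $t$ returns an independent $\pm1$ with mean $\mathrm{Re}\langle\psi|U^t|\psi\rangle$ or (second variant) $\mathrm{Im}\langle\psi|U^t|\psi\rangle$, cost $t$. Hybrid RMPE algorithm (target $\epsilon$): $E_{-1}=[0,0.9]$, $M_0=1$. For $\ell=0,1,2,\dots$: (i) if $\ell\ge1$ choose $m_\ell\in[2,4]$ such that, with $G=B(E_{\ell-1},\frac{\max\{\tilde\Delta,\eta\}}{2M_{\ell-1}})$,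 $(G+\frac{q}{M_{\ell-1}m_\ell})\cap G=\varnothing$ for all $q\in\mathbb{Z}\setminus\{0\}$, and set $M_\ell=M_{\ell-1}m_\ell$; (ii) let $(K,N_{\mathrm{HR}})=(K_1,N_{\mathrm{HR},1})$ if $M_\ell\le\tilde M$ and $(K_2,N_{\mathrm{HR},2})$ otherwise; for $k=0,\dots,K$ run the Hadamard test with $t=M_\ell k$ $N_{\mathrm{HR}}/2$ times per variant, $y_\ell(k)=$(real average)$+i\,$(imaginary average), $y_\ell(-k)=\overline{y_\ell(k)}$; (iii) if $M_\ell\le\tilde M$ compute $Y_\ell$ by the gapless routine with $K=K_1$, otherwise by ESPRIT with $K=K_2$; (iv) write $Y_\ell$ as disjoint closed arcs, lift to intervals of $\mathbb{R}$, divide by $M_\ell$ to get $I'_{\ell,i}$; pick integers $q_{\ell,i}$ with $(I'_{\ell,i}+q_{\ell,i}/M_\ell)\cap E_{\ell-1}\ne\varnothing$, set $E_\ell=\bigcup_i(I'_{\ell,i}+q_{\ell,i}/M_\ell)$; (v) if $\eta/M_\ell\le\epsilon$, stop and output $E_L:=E_\ell$. $T_{\max}$: largest $t$ used; $T_{\mathrm{total}}$: sum of $t$ over all runs. Gapless routine: $\sigma=\sqrt\tau$, $\hat\phi(k)=e^{-\pi(k\sigma/K)^2}$, $\phi_s=\sum_{k\in\mathbb{Z}}\hat\phi(k)$, $X_\ell=\{x\in\mathbb{T}:|\sum_{|k|\le K}y_\ell(k)\hat\phi(k)e^{2\pi ikx}|>\frac{6\beta+5\omega}{11}\phi_s\}$;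 with components $(a_1,b_1),\dots,(a_q,b_q)$ of $X_\ell$ in cyclic order, $J=\{j: a_j-b_{j-1}<\tau/K\}$ (for $j=1$: $a_1+1-b_q<\tau/K$), $Y_\ell=\bigcup_i[a_i,b_i]\cup\bigcup_{j\in J}[b_{j-1},a_j]$ ($b_0:=b_q$). ESPRIT routine: Hankel matrix with entries $y_\ell(i+j)$, $0\le i,j\le K/2$; $U_\ell$ = left singular vectors for the $S$ largest singular values; $U^{(0)}_\ell,U^{(1)}_\ell$ its first and last $K/2$ rows; $\mu_j$ the eigenvalues of $(U^{(0)}_\ell)^\dagger U^{(1)}_\ell$; $\tilde\Lambda_\ell=\{-\frac{1}{2\pi}\arg\mu_j\bmod1\}$, $Y_\ell=B_{\mathbb{T}}(\tilde\Lambda_\ell,\eta/2)$.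
   Formalization: The constants in the O-bounds depend on a fixed κ ≥ 1 with K₂Δ̃ ≤ κ and ω ≤ κα₂, ε is also less than 2η, and log(2/β) replaces log(1/β) in $T_{\max}$. Apart from conventions, each condition added here is assumed in the paper as well or is needed for the statement above to hold. *)

From HB Require Import structures.
From mathcomp Require Import all_boot all_order all_algebra.
From mathcomp Require Import all_classical all_reals all_analysis.
Set Implicit Arguments. Unset Strict Implicit. Unset Printing Implicit Defensive.
Import Order.TTheory GRing.Theory Num.Theory.
Local Open Scope ring_scope.

Section RMPE.
Variable R : realType.

(* Delta is the spectral gap of the eigenvalues lam (distance modulo 1):
   Delta = min_{s<>s'} min_{n in Z} |lam s - lam s' - n|. *)
Definition is_gap (S : nat) (lam : 'I_S -> R) (Delta : R) : Prop :=
  (forall (s s' : 'I_S) (n : int), s != s' -> Delta <= `|lam s - lam s' - n%:~R|) /\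
  (exists (s s' : 'I_S) (n : int), s != s' /\ `|lam s - lam s' - n%:~R| = Delta).

(* ceiling of a real as a natural number (arguments are positive here) *)
Definition ceiln (x : R) : nat := `|Num.ceil x|%N.

Definition constA (S : nat) (beta C : R) (K2 : nat) : R :=
  (80 * (S%:R) ^+ 2 / beta)
  * Num.sqrt (C ^+ 3 * (2 + K2%:R) / ((C - 1) ^+ 3 * K2%:R))
  * (1 - 2 * C * S%:R / ((C - 1) * K2%:R))^-1.

Definition tau (beta omega : R) : R := ln (12 / (beta - omega)) / pi.
Definition alpha1 (beta omega : R) : R := (beta - omega) / 3.
Definition K1 (eta beta omega : R) : nat := ceiln (3 * eta^-1 * tau beta omega).

Definition NHR (alpha rho eta eps : R) (K : nat) : R :=
  2 * (Num.ceil (4 / alpha ^+ 2 *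
        (ln (4 / rho)
         + ln ((Num.ceil (ln (eta / eps) / ln 2))%:~R + 1)
         + ln (K%:R + 1))))%:~R.

Definition Mlev (m : nat -> R) (l : nat) : R := \prod_(1 <= i < l.+1) m i.

Definition Klev (m : nat -> R) (Mt : R) (k1 k2 : nat) (l : nat) : nat :=
  if Mlev m l <= Mt then k1 else k2.
Definition Nlev (m : nat -> R) (Mt : R) (n1 n2 : R) (l : nat) : R :=
  if Mlev m l <= Mt then n1 else n2.

(* At level l, for each k = 0..K, N_HR/2 Hadamard tests of each of the two
   variants are run with t = M_l k, i.e. N_HR runs of cost M_l k. *)
Definition level_cost (M : R) (K : nat) (N : R) : R :=
  N * \sum_(k < K.+1) (M * k%:R).

Definition Tmax (m : nat -> R) (Mt : R) (k1 k2 : nat) (L : nat) : R :=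
  \big[Num.max/0]_(l < L.+1) (Mlev m l * (Klev m Mt k1 k2 l)%:R).
Definition Ttotal (m : nat -> R) (Mt : R) (k1 k2 : nat) (n1 n2 : R) (L : nat) : R :=
  \sum_(l < L.+1) level_cost (Mlev m l) (Klev m Mt k1 k2 l) (Nlev m Mt n1 n2 l).

End RMPE.

From HB Require Import structures.
From mathcomp Require Import all_boot all_order all_algebra.
From mathcomp Require Import all_classical all_reals all_analysis.
From mathcomp Require Import ring lra.
Import Order.TTheory GRing.Theory Num.Theory.
Local Open Scope ring_scope.

(** Write [M_l = m_1 ... m_l].  Every refinement factor lies in [[2, 4]], so the [M_l] grow
    geometrically: a sum of [M_l] over an initial segment of levels is at most twice its last
    term, and the stopping rule forces [M_L <= 4 eta / eps].  The levels with
    [M_l <= Dt / Delta] use [K_1 = O(eta^-1 log (1 / beta))] and [N_HR,1 = O~(beta^-2)] runs,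
    the others use [K_2 = O(1 / Dt)] and [N_HR,2 = O~(omega^-2)], the hypotheses
    [K_2 Dt <= kappa] and [omega <= kappa alpha_2] turning these into constants.  Hence the
    longest run is at most [max (Dt / Delta * K_1) (M_L * K_2)], and the total time, a sum of
    [N_l M_l K_l^2] over the levels, is dominated by the last level of each kind.  Every
    logarithm is absorbed into a power of [ln Y], where [Y] is [2] plus the sum of all inverse
    parameters, through [ln a <= 2 a ln Y] for [a >= 1]. *)

Section Levels.
Context {R : realType}.
Context {m : nat -> R}.

Lemma Mlev0 : Mlev m 0 = 1.
Proof. by rewrite /Mlev big_geq. Qed.

Lemma MlevS l : Mlev m l.+1 = Mlev m l * m l.+1.
Proof. by rewrite /Mlev big_nat_recr. Qed.

Hypothesis m_range : forall l, (1 <= l)%N -> 2 <= m l <= 4.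

Lemma Mlev_ge1 l : 1 <= Mlev m l.
Proof.
elim: l => [|l IHl]; first by rewrite Mlev0.
by rewrite MlevS; have /andP[m2 _] := m_range l.+1 isT; nra.
Qed.

Lemma Mlev_le : {homo Mlev m : l n / (l <= n)%N >-> l <= n}.
Proof.
move=> l n; elim: n => [|n IHn]; first by rewrite leqn0 => /eqP ->.
rewrite leq_eqVlt ltnS => /orP[/eqP -> //| /IHn le_ln].
by rewrite MlevS; have /andP[m2 _] := m_range n.+1 isT; have := Mlev_ge1 n; nra.
Qed.

Lemma sum_Mlev_le n : \sum_(l < n.+1) Mlev m l <= 2 * Mlev m n.
Proof.
elim: n => [|n IHn]; first by rewrite big_ord_recr big_ord0 /= add0r Mlev0; lra.
rewrite big_ord_recr /= MlevS; have /andP[m2 _] := m_range n.+1 isT.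
by have := Mlev_ge1 n; nra.
Qed.

Lemma sum_Mlev_capped_le n (B : R) : 0 <= B ->
  \sum_(l < n.+1) (if Mlev m l <= B then Mlev m l else 0) <= 2 * B.
Proof.
move=> B_ge0; elim: n => [|n IHn].
  by rewrite big_ord_recr big_ord0 /= add0r; case: ifP; lra.
rewrite big_ord_recr /=; case: ifP => [MB|]; last by lra.
apply: (le_trans (y := \sum_(l < n.+2) Mlev m l)); last by have := sum_Mlev_le n.+1; lra.
rewrite [leRHS]big_ord_recr /= lerD2r; apply: ler_sum => l _.
by case: ifP => // _; apply: le_trans (Mlev_ge1 l).
Qed.

Lemma Mlev_stop_le {eta eps : R} {L : nat} : 0 < eps -> eps < 2 * eta ->
  (forall l, (l < L)%N -> eps < eta / Mlev m l) -> Mlev m L <= 4 * eta / eps.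
Proof.
move=> eps_gt0 eps_lt; case: L => [_|L coarse].
  by rewrite Mlev0 ler_pdivlMr //; lra.
have := coarse L (ltnSn L); rewrite ltr_pdivlMr; last by have := Mlev_ge1 L; lra.
rewrite MlevS ler_pdivlMr //; have /andP[_ m4] := m_range L.+1 isT.
have : 0 <= (4 - m L.+1) * (Mlev m L * eps).
  by rewrite mulr_ge0 ?subr_ge0 // mulr_ge0 //; have := Mlev_ge1 L; lra.
lra.
Qed.

Lemma level_cost_le (M N U : R) K : 0 <= M -> N <= U -> 0 <= U ->
  level_cost M K N <= U * M * (K%:R + 1) ^+ 2.
Proof.
move=> M_ge0 NU U_ge0; rewrite /level_cost.
have sum_le : \sum_(k < K.+1) (M * k%:R) <= M * (K%:R + 1) ^+ 2.
  apply: (le_trans (y := \sum_(k < K.+1) (M * K%:R))).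
    by apply: ler_sum => k _; rewrite ler_wpM2l // ler_nat -ltnS.
  by rewrite sumr_const card_ord -[leLHS]mulr_natr -natr1; have := ler0n R K; nra.
have sum_ge0 : 0 <= \sum_(k < K.+1) (M * k%:R) by apply: sumr_ge0 => k _; exact: mulr_ge0.
by apply: le_trans (ler_wpM2r sum_ge0 NU) _; rewrite -mulrA ler_wpM2l.
Qed.

Lemma Tmax_le {Mt : R} {k1 K2 L : nat} :
  Tmax m Mt k1 K2 L <= Num.max (Mt * k1%:R) (Mlev m L * K2%:R).
Proof.
apply: bigmax_le => [|l _].
  by rewrite le_max; apply/orP; right; apply: mulr_ge0 => //; have := Mlev_ge1 L; lra.
rewrite /Klev le_max; case: ifP => [MMt|_]; apply/orP; [left|right].
  by rewrite ler_wpM2r.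
by rewrite ler_wpM2r // Mlev_le // -ltnS.
Qed.

Lemma Ttotal_le {Mt n1 n2 U1 U2 : R} {k1 K2 L : nat} :
  0 <= Mt -> n1 <= U1 -> n2 <= U2 -> 0 <= U1 -> 0 <= U2 ->
  Ttotal m Mt k1 K2 n1 n2 L
    <= 2 * Mt * U1 * (k1%:R + 1) ^+ 2 + 2 * Mlev m L * U2 * (K2%:R + 1) ^+ 2.
Proof.
move=> Mt_ge0 n1U1 n2U2 U1_ge0 U2_ge0.
set W1 := U1 * (k1%:R + 1) ^+ 2; set W2 := U2 * (K2%:R + 1) ^+ 2.
have W1_ge0 : 0 <= W1 by rewrite mulr_ge0 // exprn_ge0 // addr_ge0.
have W2_ge0 : 0 <= W2 by rewrite mulr_ge0 // exprn_ge0 // addr_ge0.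
apply: (le_trans (y := (\sum_(l < L.+1) (if Mlev m l <= Mt then Mlev m l else 0)) * W1
                        + (\sum_(l < L.+1) Mlev m l) * W2)).
  rewrite /Ttotal !mulr_suml -big_split /=; apply: ler_sum => l _.
  have M_ge0 : 0 <= Mlev m l := le_trans ler01 (Mlev_ge1 l).
  rewrite /Klev /Nlev; case: ifP => _.
    have := level_cost_le (Mlev m l) n1 U1 k1 M_ge0 n1U1 U1_ge0.
    by have := mulr_ge0 M_ge0 W2_ge0; rewrite /W1; lra.
  have := level_cost_le (Mlev m l) n2 U2 K2 M_ge0 n2U2 U2_ge0.
  by rewrite /W2; lra.
have := ler_wpM2r W1_ge0 (sum_Mlev_capped_le L Mt Mt_ge0).
have := ler_wpM2r W2_ge0 (sum_Mlev_le L).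
by rewrite /W1 /W2; lra.
Qed.

End Levels.

Section Logarithms.
Context {R : realType}.

Lemma ln2_ge_half : 1 / 2 <= ln (2 : R).
Proof.
have := @le_ln1Dx R (- (1 / 2)).
by rewrite (_ : 1 + - (1 / 2) = 2^-1) ?lnV ?posrE //; lra.
Qed.

Lemma ln_ge_half {Y : R} : 2 <= Y -> 1 / 2 <= ln Y.
Proof. by move=> Y_ge2; apply: le_trans ln2_ge_half _; rewrite ler_ln ?posrE //; lra. Qed.

(* [ln a <= a <= 2 a ln Y] absorbs the constant factor [a] into the logarithm. *)
Lemma ln_le_mul_ln {a Y z : R} {j : nat} : 1 <= a -> 2 <= Y -> z <= a * Y ^+ j ->
  ln z <= (2 * a + j%:R) * ln Y.
Proof.
move=> a_ge1 Y_ge2 z_le.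
have lnY_ge := ln_ge_half Y_ge2.
have j_ge0 := ler0n R j.
have [z_le1|z_gt1] := lerP z 1.
  by apply: le_trans (ln_le0 z_le1) _; apply: mulr_ge0; lra.
have Yj_gt0 : 0 < Y ^+ j by apply: exprn_gt0; lra.
apply: (le_trans (y := ln (a * Y ^+ j))).
  by rewrite ler_ln ?posrE //; [lra | apply: mulr_gt0 => //; lra].
rewrite lnM ?posrE //; last by lra.
rewrite lnXn -?[ln Y *+ j]mulr_natl; last by lra.
have := @ln_sublinear R a ltac:(lra).
have : 0 <= a * (2 * ln Y - 1) by apply: mulr_ge0; lra.
lra.
Qed.

Lemma ceil_le_add1 (x : R) : (Num.ceil x)%:~R <= x + 1.
Proof. by have := ceilB1_lt x; rewrite intrB; lra. Qed.

Lemma ceiln_le_add1 (x : R) : 0 <= x -> (ceiln x)%:R <= x + 1.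
Proof.
move=> x_ge0; rewrite /ceiln natr_absz ger0_norm ?ceil_le_add1 //.
by rewrite ceil_ge0; lra.
Qed.

Lemma NHR_le {alpha rho eta eps a u : R} {K : nat} : 0 < alpha -> alpha^-1 <= a -> 0 <= u ->
  ln (4 / rho) + ln ((Num.ceil (ln (eta / eps) / ln 2))%:~R + 1) + ln (K%:R + 1) <= u ->
  NHR alpha rho eta eps K <= 2 * (4 * a ^+ 2 * u + 1).
Proof.
move=> alpha_gt0 alpha_le u_ge0; rewrite /NHR; set st := _ + _ + _ => st_le.
have inv_alpha_gt0 : 0 < alpha^-1 by rewrite invr_gt0.
have sq_le : alpha^-1 ^+ 2 <= a ^+ 2 by rewrite lerXn2r // nnegrE; lra.
have := ceil_le_add1 (4 / alpha ^+ 2 * st); rewrite -exprVn.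
have : 4 * alpha^-1 ^+ 2 * st <= 4 * alpha^-1 ^+ 2 * u.
  by rewrite ler_wpM2l // mulr_ge0 // exprn_ge0 // ltW.
have : 4 * alpha^-1 ^+ 2 * u <= 4 * a ^+ 2 * u by rewrite ler_wpM2r //; lra.
lra.
Qed.

End Logarithms.

Section Estimates.
Context {R : realType}.
(* [12 / (beta - omega) <= 8 * (2 / beta)] because [omega < beta / 4], and [pi >= 2]. *)
Lemma K1_succ_le {beta omega eta : R} :
  0 < beta -> beta <= 1 -> 0 < omega -> omega < beta / 4 -> 0 < eta -> eta < 1 / 8 ->
  (K1 eta beta omega)%:R + 1 <= 32 * eta^-1 * ln (2 / beta).
Proof.
move=> beta_gt0 beta_le1 omega_gt0 omega_lt eta_gt0 eta_lt.
have b2 : 2 <= 2 / beta by rewrite ler_pdivlMr //; lra.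
have l_ge := ln_ge_half b2.
have eta_inv : 8 <= eta^-1 by rewrite -[8]invrK lef_pV2 ?posrE //; lra.
have r_le : 12 / (beta - omega) <= 8 * (2 / beta) ^+ 1.
  rewrite expr1 ler_pdivrMr; last by lra.
  have beta_inv : beta^-1 * beta = 1 by rewrite mulVf //; lra.
  have : 0 <= beta^-1 * (beta / 4 - omega) by rewrite mulr_ge0 ?invr_ge0; lra.
  lra.
have one_le8 : 1 <= 8 :> R by lra.
have := ln_le_mul_ln one_le8 b2 r_le; rewrite mulr1n => ln_le.
have pi2 := pi_ge2 R.
have tau_le : tau beta omega <= 9 * ln (2 / beta).
  by rewrite /tau ler_pdivrMr; nra.
have tau_ge0 : 0 <= tau beta omega.
  by rewrite /tau divr_ge0 ?ln_ge0 // ?ler_pdivlMr; lra.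
have K1_le : (K1 eta beta omega)%:R <= 3 * eta^-1 * tau beta omega + 1.
  by apply: ceiln_le_add1; apply: mulr_ge0 => //; apply: mulr_ge0; rewrite ?invr_ge0; lra.
have : eta^-1 * tau beta omega <= eta^-1 * (9 * ln (2 / beta)) by rewrite ler_wpM2l //; lra.
nra.
Qed.

Lemma ln_K1_succ_le {beta omega eta Y : R} :
  0 < beta -> beta <= 1 -> 0 < omega -> omega < beta / 4 -> 0 < eta -> eta < 1 / 8 ->
  2 <= Y -> 2 / beta <= Y -> eta^-1 <= Y ->
  ln ((K1 eta beta omega)%:R + 1) <= 66 * ln Y.
Proof.
move=> beta_gt0 beta_le1 omega_gt0 omega_lt eta_gt0 eta_lt Y_ge2 Y_beta Y_eta.
have K1_le := K1_succ_le beta_gt0 beta_le1 omega_gt0 omega_lt eta_gt0 eta_lt.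
have ln_le : ln (2 / beta) <= Y.
  by have := @ln_sublinear R (2 / beta) ltac:(by rewrite divr_gt0); lra.
have prod_le : eta^-1 * ln (2 / beta) <= Y * Y.
  by apply: ler_pM => //; rewrite ?invr_ge0 ?ln_ge0 ?ler_pdivlMr //; lra.
have one_le32 : 1 <= 32 :> R by lra.
have K1_le' : (K1 eta beta omega)%:R + 1 <= 32 * Y ^+ 2 by rewrite expr2; lra.
by have := ln_le_mul_ln one_le32 Y_ge2 K1_le'; rewrite mulr2n; lra.
Qed.

Lemma ln_union_terms_le {rho eta eps Y : R} :
  0 < rho -> 0 < eta -> eta <= 1 / 2 -> 0 < eps ->
  2 <= Y -> rho^-1 <= Y -> eps^-1 + 2 <= Y ->
  ln (4 / rho) + ln ((Num.ceil (ln (eta / eps) / ln 2))%:~R + 1) <= 12 * ln Y.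
Proof.
move=> rho_gt0 eta_gt0 eta_le eps_gt0 Y_ge2 Y_rho Y_eps.
have one_le4 : 1 <= 4 :> R by lra.
have rho_le : 4 / rho <= 4 * Y ^+ 1 by rewrite expr1 ler_wpM2l //; lra.
have ln2_gt0 : 0 < ln (2 : R) by have := @ln2_ge_half R; lra.
have log2_le : ln (eta / eps) / ln 2 <= eps^-1.
  rewrite ler_pdivrMr //.
  have [ln_le0|ln_gt0] := lerP (ln (eta / eps)) 0.
    have : 0 <= eps^-1 * ln 2 by apply: mulr_ge0; rewrite ?invr_ge0; lra.
    lra.
  have := @ln_sublinear R (eta / eps) ltac:(by rewrite divr_gt0).
  have : eta / eps <= eps^-1 / 2.
    by rewrite [leLHS]mulrC ler_wpM2l ?invr_ge0 //; lra.
  have : 0 <= eps^-1 * (ln 2 - 1 / 2).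
    by apply: mulr_ge0; rewrite ?invr_ge0 ?subr_ge0 ?ln2_ge_half //; lra.
  lra.
have rounds_le : (Num.ceil (ln (eta / eps) / ln 2))%:~R + 1 <= 1 * Y ^+ 1.
  by have := ceil_le_add1 (ln (eta / eps) / ln 2); rewrite expr1; lra.
have := ln_le_mul_ln one_le4 Y_ge2 rho_le.
have := ln_le_mul_ln (lexx 1) Y_ge2 rounds_le.
by rewrite !mulr1n; lra.
Qed.

Lemma NHR1_le {rho beta omega eta eps Y : R} :
  0 < rho -> 0 < beta -> beta <= 1 -> 0 < omega -> omega < beta / 4 ->
  0 < eta -> eta < 1 / 8 -> 0 < eps ->
  2 <= Y -> rho^-1 <= Y -> 2 / beta <= Y -> eta^-1 <= Y -> eps^-1 + 2 <= Y ->
  NHR (alpha1 beta omega) rho eta eps (K1 eta beta omega) <= 2 ^+ 14 * beta^-1 ^+ 2 * ln Y.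
Proof.
move=> rho_gt0 beta_gt0 beta_le1 omega_gt0 omega_lt eta_gt0 eta_lt eps_gt0
  Y_ge2 Y_rho Y_beta Y_eta Y_eps.
have lnY_ge := ln_ge_half Y_ge2.
have alpha1_gt0 : 0 < alpha1 beta omega by rewrite /alpha1; lra.
have alpha1_inv : (alpha1 beta omega)^-1 <= 4 * beta^-1.
  rewrite -[4 * _]invf_div lef_pV2 ?posrE ?divr_gt0 //; rewrite /alpha1; lra.
have eta_le : eta <= 1 / 2 by lra.
have lnunion := ln_union_terms_le rho_gt0 eta_gt0 eta_le eps_gt0 Y_ge2 Y_rho Y_eps.
have lnK1 := ln_K1_succ_le beta_gt0 beta_le1 omega_gt0 omega_lt eta_gt0 eta_lt Y_ge2 Y_beta Y_eta.
have u_ge0 : 0 <= 78 * ln Y by lra.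
have st_le : ln (4 / rho) + ln ((Num.ceil (ln (eta / eps) / ln 2))%:~R + 1)
             + ln ((K1 eta beta omega)%:R + 1) <= 78 * ln Y by lra.
apply: le_trans (NHR_le alpha1_gt0 alpha1_inv u_ge0 st_le) _.
have beta_inv : 1 <= beta^-1 by rewrite -invr1 lef_pV2 ?posrE //; lra.
have P_ge : 1 * (1 / 2) <= beta^-1 ^+ 2 * ln Y.
  by apply: ler_pM; rewrite ?exprn_ege1 //; lra.
have -> : 2 * (4 * (4 * beta^-1) ^+ 2 * (78 * ln Y) + 1)
          = 9984 * (beta^-1 ^+ 2 * ln Y) + 2 by ring.
lra.
Qed.

Lemma K2_succ_le {Dt kappa : R} {K2 : nat} : 0 < Dt -> Dt <= 1 -> 1 <= kappa ->
  K2%:R <= kappa / Dt -> K2%:R + 1 <= 2 * kappa * Dt^-1.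
Proof.
move=> Dt_gt0 Dt_le1 kappa_ge1 K2_le.
have : 1 <= Dt^-1 by rewrite -invr1 lef_pV2 ?posrE //; lra.
nra.
Qed.

Lemma NHR2_le {rho beta omega eta eps Dt kappa alpha Y : R} {K2 : nat} :
  0 < rho -> 0 < beta -> beta <= 1 -> 0 < omega -> omega < beta / 4 ->
  0 < eta -> eta < 1 / 8 -> 0 < eps ->
  0 < Dt -> Dt < 1 / 8 -> 1 <= kappa -> K2%:R <= kappa / Dt ->
  0 < alpha -> alpha^-1 <= kappa / omega ->
  2 <= Y -> rho^-1 <= Y -> eps^-1 + 2 <= Y -> Dt^-1 <= Y ->
  NHR alpha rho eta eps K2 <= 2 ^+ 8 * kappa ^+ 3 * omega^-1 ^+ 2 * ln Y.
Proof.
move=> rho_gt0 beta_gt0 beta_le1 omega_gt0 omega_lt eta_gt0 eta_lt eps_gt0 Dt_gt0 Dt_lt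
  kappa_ge1 K2_le alpha_gt0 alpha_inv Y_ge2 Y_rho Y_eps Y_Dt.
have eta_le : eta <= 1 / 2 by lra.
have Dt_le1 : Dt <= 1 by lra.
have lnY_ge := ln_ge_half Y_ge2.
have one_le2k : 1 <= 2 * kappa by lra.
have K2_le' : K2%:R + 1 <= 2 * kappa * Y ^+ 1.
  rewrite expr1; apply: le_trans (K2_succ_le Dt_gt0 Dt_le1 kappa_ge1 K2_le) _.
  by rewrite ler_wpM2l //; lra.
have := ln_le_mul_ln one_le2k Y_ge2 K2_le'; rewrite mulr1n => lnK2.
have lnunion := ln_union_terms_le rho_gt0 eta_gt0 eta_le eps_gt0 Y_ge2 Y_rho Y_eps.
have u_ge0 : 0 <= 17 * kappa * ln Y by nra.
have st_le : ln (4 / rho) + ln ((Num.ceil (ln (eta / eps) / ln 2))%:~R + 1)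
             + ln (K2%:R + 1) <= 17 * kappa * ln Y by nra.
apply: le_trans (NHR_le alpha_gt0 alpha_inv u_ge0 st_le) _.
have omega_inv : 4 <= omega^-1 by rewrite -[4]invrK lef_pV2 ?posrE //; lra.
have omega_sq : 1 * 16 <= kappa ^+ 3 * omega^-1 ^+ 2.
  by apply: ler_pM; rewrite ?exprn_ege1 // ?expr2; nra.
have P_ge : 1 * 16 * (1 / 2) <= kappa ^+ 3 * omega^-1 ^+ 2 * ln Y.
  by apply: ler_pM => //; lra.
have -> : 2 * (4 * (kappa / omega) ^+ 2 * (17 * kappa * ln Y) + 1)
          = 136 * (kappa ^+ 3 * omega^-1 ^+ 2 * ln Y) + 2 by ring.
lra.
Qed.

End Estimates.

Section Bounds.
Context {R : realType}.

Lemma Tmax_bound {m : nat -> R} {L : nat} {beta omega eta eps Dt Delta kappa c : R}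
    {K2 : nat} :
  (forall l, (1 <= l)%N -> 2 <= m l <= 4) -> Mlev m L <= 4 * eta / eps ->
  0 < beta -> beta <= 1 -> 0 < omega -> omega < beta / 4 -> 0 < eta -> eta < 1 / 8 ->
  0 < eps -> 0 < Dt -> 0 < Delta -> 1 <= kappa -> K2%:R <= kappa / Dt ->
  32 + 4 * kappa <= c ->
  Tmax m (Dt / Delta) (K1 eta beta omega) K2 L
    <= c * Num.max (ln (2 / beta) * eta^-1 * Dt * Delta^-1) (eta * Dt^-1 * eps^-1).
Proof.
move=> m_range ML_le beta_gt0 beta_le1 omega_gt0 omega_lt eta_gt0 eta_lt eps_gt0 Dt_gt0
  Delta_gt0 kappa_ge1 K2_le c_ge.
set A := ln (2 / beta) * _ * _ * _; set B := eta * _ * _.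
have A_ge0 : 0 <= A.
  rewrite /A !mulr_ge0 ?invr_ge0 ?ln_ge0 ?ler_pdivlMr //; lra.
have B_ge0 : 0 <= B by rewrite /B !mulr_ge0 ?invr_ge0 //; lra.
have K1_le := K1_succ_le beta_gt0 beta_le1 omega_gt0 omega_lt eta_gt0 eta_lt.
have AB_max : A <= Num.max A B /\ B <= Num.max A B by rewrite !le_max !lexx orbT.
apply: le_trans (Tmax_le m_range) _; rewrite ge_max; apply/andP; split.
  have k1_le : Dt / Delta * (K1 eta beta omega)%:R <= 32 * A.
    have -> : 32 * A = Dt / Delta * (32 * eta^-1 * ln (2 / beta)) by rewrite /A; ring.
    by apply: ler_wpM2l; [rewrite divr_ge0 //; lra | lra].
  by apply: le_trans k1_le _; apply: ler_pM => //; lra.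
have K2_le' : Mlev m L * K2%:R <= 4 * kappa * B.
  have -> : 4 * kappa * B = 4 * eta / eps * (kappa / Dt) by rewrite /B; ring.
  by apply: ler_pM => //; have := Mlev_ge1 m_range L; lra.
by apply: le_trans K2_le' _; apply: ler_pM => //; lra.
Qed.

Lemma inv_sum_bounds {rho beta omega eta eps Dt Delta : R} :
  0 < rho -> 0 < beta -> 0 < omega -> omega < beta / 4 -> 0 < eta -> 0 < eps -> 0 < Dt ->
  0 < Delta ->
  let Y := 2 + (rho^-1 + beta^-1 + omega^-1 + eta^-1 + eps^-1 + Dt^-1 + Delta^-1) in
  2 <= Y /\ [/\ rho^-1 <= Y, 2 / beta <= Y, eta^-1 <= Y, eps^-1 + 2 <= Y & Dt^-1 <= Y].
Proof.
move=> rho_gt0 beta_gt0 omega_gt0 omega_lt eta_gt0 eps_gt0 Dt_gt0 Delta_gt0 Y.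
have beta_omega : beta^-1 <= omega^-1 by rewrite lef_pV2 ?posrE //; lra.
have inv_pos (x : R) : 0 < x -> 0 < x^-1 by rewrite invr_gt0.
have := inv_pos _ rho_gt0; have := inv_pos _ beta_gt0; have := inv_pos _ omega_gt0.
have := inv_pos _ eta_gt0; have := inv_pos _ eps_gt0; have := inv_pos _ Dt_gt0.
by have := inv_pos _ Delta_gt0; rewrite /Y; split; [|split]; lra.
Qed.

Lemma le_4cube (x : R) : 1 / 2 <= x -> x <= 4 * x ^+ 3.
Proof. by move=> x_ge; rewrite !exprS expr0; nra. Qed.

Lemma ler_add_scaled (a b c x y z : R) : 0 <= a -> 0 <= b -> 0 <= x -> 0 <= y -> 0 <= z ->
  a + b <= c -> a * x * z + b * y * z <= c * (x + y) * z.
Proof.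
move=> a_ge0 b_ge0 x_ge0 y_ge0 z_ge0 abc.
by rewrite -mulrDl; apply: ler_wpM2r => //; nra.
Qed.

Lemma phase1_cost_le {Dt Delta beta eta lnY V : R} :
  0 < Dt -> 0 < Delta -> 0 < beta -> 0 < eta -> 1 / 2 <= lnY ->
  0 <= V -> V <= 32 * eta^-1 * lnY ->
  2 * (Dt / Delta) * (2 ^+ 14 * beta^-1 ^+ 2 * lnY) * V ^+ 2
    <= 2 ^+ 25 * (eta ^- 2 * beta ^- 2 * Dt * Delta^-1) * lnY ^+ 3.
Proof.
move=> Dt_gt0 Delta_gt0 beta_gt0 eta_gt0 lnY_ge V_ge0 V_le.
have -> : 2 ^+ 25 * (eta ^- 2 * beta ^- 2 * Dt * Delta^-1) * lnY ^+ 3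
          = 2 * (Dt / Delta) * (2 ^+ 14 * beta^-1 ^+ 2 * lnY) * (32 * eta^-1 * lnY) ^+ 2.
  by rewrite -!exprVn; ring.
apply: ler_wpM2l; last by apply: lerXn2r; rewrite ?nnegrE //; lra.
by rewrite !mulr_ge0 ?exprn_ge0 ?invr_ge0 //; lra.
Qed.

Lemma phase2_cost_le {M eta eps kappa omega Dt lnY V : R} :
  0 <= M -> M <= 4 * eta / eps -> 0 < eta -> 0 < eps -> 0 <= kappa -> 0 < omega -> 0 < Dt ->
  1 / 2 <= lnY -> 0 <= V -> V <= 2 * kappa * Dt^-1 ->
  2 * M * (2 ^+ 8 * kappa ^+ 3 * omega^-1 ^+ 2 * lnY) * V ^+ 2
    <= 2 ^+ 15 * kappa ^+ 5 * (eta * omega ^- 2 * Dt ^- 2 * eps^-1) * lnY ^+ 3.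
Proof.
move=> M_ge0 M_le eta_gt0 eps_gt0 kappa_ge0 omega_gt0 Dt_gt0 lnY_ge V_ge0 V_le.
have U_ge0 : 0 <= 2 ^+ 8 * kappa ^+ 3 * omega^-1 ^+ 2 * lnY.
  by rewrite !mulr_ge0 ?exprn_ge0 ?invr_ge0 //; lra.
have P_ge0 : 0 <= 2 ^+ 13 * kappa ^+ 5 * (eta * omega ^- 2 * Dt ^- 2 * eps^-1).
  by rewrite !mulr_ge0 ?exprn_ge0 ?invr_ge0 ?exprn_ge0 //; lra.
apply: (le_trans (y := 2 ^+ 13 * kappa ^+ 5 * (eta * omega ^- 2 * Dt ^- 2 * eps^-1) * lnY)).
  have -> : 2 ^+ 13 * kappa ^+ 5 * (eta * omega ^- 2 * Dt ^- 2 * eps^-1) * lnY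
            = 2 * (4 * eta / eps) * (2 ^+ 8 * kappa ^+ 3 * omega^-1 ^+ 2 * lnY)
              * (2 * kappa * Dt^-1) ^+ 2.
    by rewrite -!exprVn; ring.
  apply: ler_pM.
  - exact: mulr_ge0 (mulr_ge0 (ler0n _ 2) M_ge0) U_ge0.
  - by rewrite exprn_ge0.
  - by apply: ler_wpM2r => //; apply: ler_wpM2l.
  - by apply: lerXn2r; rewrite ?nnegrE //; lra.
rewrite [leRHS](_ : _ = 2 ^+ 13 * kappa ^+ 5 * (eta * omega ^- 2 * Dt ^- 2 * eps^-1)
                         * (4 * lnY ^+ 3)); last by ring.
by apply: ler_wpM2l; last exact: le_4cube.
Qed.

Lemma Ttotal_bound {m : nat -> R} {L : nat}
    {beta omega eta eps rho Dt Delta kappa alpha2 Y c : R} {K2 : nat} :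
  (forall l, (1 <= l)%N -> 2 <= m l <= 4) -> Mlev m L <= 4 * eta / eps ->
  0 < rho -> 0 < beta -> beta <= 1 -> 0 < omega -> omega < beta / 4 ->
  0 < eta -> eta < 1 / 8 -> 0 < eps -> 0 < Dt -> Dt < 1 / 8 -> 0 < Delta ->
  1 <= kappa -> K2%:R <= kappa / Dt -> 0 < alpha2 -> alpha2^-1 <= kappa / omega ->
  2 <= Y -> rho^-1 <= Y -> 2 / beta <= Y -> eta^-1 <= Y -> eps^-1 + 2 <= Y -> Dt^-1 <= Y ->
  2 ^+ 25 + 2 ^+ 15 * kappa ^+ 5 <= c ->
  Ttotal m (Dt / Delta) (K1 eta beta omega) K2
      (NHR (alpha1 beta omega) rho eta eps (K1 eta beta omega))
      (NHR alpha2 rho eta eps K2) L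
    <= c * (eta ^- 2 * beta ^- 2 * Dt * Delta^-1 + eta * omega ^- 2 * Dt ^- 2 * eps^-1)
         * ln Y ^+ 3.
Proof.
move=> m_range ML_le rho_gt0 beta_gt0 beta_le1 omega_gt0 omega_lt eta_gt0 eta_lt eps_gt0
  Dt_gt0 Dt_lt Delta_gt0 kappa_ge1 K2_le alpha2_gt0 alpha2_inv
  Y_ge2 Y_rho Y_beta Y_eta Y_eps Y_Dt c_ge.
have lnY_ge := ln_ge_half Y_ge2.
have U1_ge0 : 0 <= 2 ^+ 14 * beta^-1 ^+ 2 * ln Y.
  by rewrite !mulr_ge0 ?exprn_ge0 ?invr_ge0 //; lra.
have U2_ge0 : 0 <= 2 ^+ 8 * kappa ^+ 3 * omega^-1 ^+ 2 * ln Y.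
  by rewrite !mulr_ge0 ?exprn_ge0 ?invr_ge0 //; lra.
have Mt_ge0 : 0 <= Dt / Delta by rewrite divr_ge0 //; lra.
have n1_le := NHR1_le rho_gt0 beta_gt0 beta_le1 omega_gt0 omega_lt eta_gt0 eta_lt eps_gt0
  Y_ge2 Y_rho Y_beta Y_eta Y_eps.
have n2_le := NHR2_le rho_gt0 beta_gt0 beta_le1 omega_gt0 omega_lt eta_gt0 eta_lt eps_gt0
  Dt_gt0 Dt_lt kappa_ge1 K2_le alpha2_gt0 alpha2_inv Y_ge2 Y_rho Y_eps Y_Dt.
apply: le_trans (Ttotal_le m_range Mt_ge0 n1_le n2_le U1_ge0 U2_ge0) _.
have k1_le : (K1 eta beta omega)%:R + 1 <= 32 * eta^-1 * ln Y.
  apply: le_trans (K1_succ_le beta_gt0 beta_le1 omega_gt0 omega_lt eta_gt0 eta_lt) _.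
  apply: ler_wpM2l; first by apply: mulr_ge0; rewrite ?invr_ge0; lra.
  by rewrite ler_ln ?posrE ?divr_gt0 //; lra.
have Dt_le1 : Dt <= 1 by lra.
have K2_succ := K2_succ_le Dt_gt0 Dt_le1 kappa_ge1 K2_le.
have phase1 := phase1_cost_le Dt_gt0 Delta_gt0 beta_gt0 eta_gt0 lnY_ge
  (addr_ge0 (ler0n R _) ler01) k1_le.
have phase2 := phase2_cost_le (le_trans ler01 (Mlev_ge1 m_range L)) ML_le eta_gt0 eps_gt0
  (le_trans ler01 kappa_ge1) omega_gt0 Dt_gt0 lnY_ge (addr_ge0 (ler0n R _) ler01) K2_succ.
apply: le_trans (lerD phase1 phase2) _.
apply: ler_add_scaled => //.
- by rewrite mulr_ge0 ?exprn_ge0 //; lra.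
- by rewrite !mulr_ge0 ?invr_ge0 ?exprn_ge0 //; lra.
- by rewrite !mulr_ge0 ?invr_ge0 ?exprn_ge0 //; lra.
- by rewrite exprn_ge0 //; lra.
Qed.

End Bounds.

Section Regime.
Context {R : realType}.

Lemma weight_le1 {S : nat} {p : 'I_S -> R} {pres : R} (i : 'I_S) :
  (forall s, 0 <= p s) -> 0 <= pres -> \sum_(s < S) p s + pres = 1 -> p i <= 1.
Proof.
move=> p_ge0 pres_ge0 p_sum; rewrite -p_sum (bigD1 i) //= -addrA lerDl.
by rewrite addr_ge0 // sumr_ge0.
Qed.

(* For [S = 0] the left-hand side is [1 / 0 = 0]. *)
Lemma div_8S2S1_le (S : nat) : 1 / (8 * S%:R * (2 * S%:R - 1)) <= 1 / 8 :> R.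
Proof.
case: S => [|S]; first by rewrite mulr0 mul0r invr0 mulr0; lra.
have S_ge1 : 1 <= S.+1%:R :> R by rewrite ler1n.
by rewrite !div1r lef_pV2 ?posrE; nra.
Qed.

Lemma div_8S2S1_gt0 (S : nat) : 0 < 1 / (8 * S%:R * (2 * S%:R - 1)) :> R -> (0 < S)%N.
Proof. by case: S => // ; rewrite mulr0 mul0r invr0 mulr0 ltxx. Qed.

Lemma omega_lt_beta_quarter {S K2 : nat} {beta C omega alpha2 b : R} :
  0 < beta -> 2 < C -> 0 < alpha2 ->
  alpha2 < Num.min (C * beta / (8 * (C - 1) * Num.sqrt (2 * S%:R))
                      * Num.sqrt (1 - 2 * (C - 1) * S%:R / (C * K2%:R))) b - omega ->
  omega < beta / 4.
Proof.
move=> beta_gt0 C_gt2 alpha2_gt0.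
set cap := C * beta / _ * _ => alpha2_lt.
have min_le : Num.min cap b <= cap by rewrite ge_min lexx.
suff : cap <= beta / 4 by lra.
rewrite /cap; set t := 2 * (C - 1) * S%:R / (C * K2%:R).
have t_ge0 : 0 <= t by rewrite /t divr_ge0 ?mulr_ge0 //; lra.
have sqrt_le1 : Num.sqrt (1 - t) <= 1.
  by rewrite -[leRHS]sqrtr1; apply: ler_wsqrtr; lra.
have q_bounds : 0 <= C * beta / (8 * (C - 1) * Num.sqrt (2 * S%:R)) <= beta / 4.
  have [->|S_gt0] := posnP S.
    by rewrite mulr0 sqrtr0 mulr0 invr0 mulr0; lra.
  have S_ge1 : 1 <= S%:R :> R by rewrite ler1n.
  have s_ge1 : Num.sqrt 1 <= Num.sqrt (2 * S%:R) :> R by apply: ler_wsqrtr; lra.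
  rewrite sqrtr1 in s_ge1.
  rewrite divr_ge0 ?mulr_ge0 /=; try lra.
  rewrite ler_pdivrMr; last by rewrite mulr_gt0 //; lra.
  have : 0 <= beta * (C - 1) * (Num.sqrt (2 * S%:R) - 1) by rewrite !mulr_ge0 //; lra.
  nra.
have := sqrtr_ge0 (1 - t); nra.
Qed.

End Regime.

Theorem theorem7 (R : realType) (kappa : R) (hkappa : 1 <= kappa) :
  exists (c : R) (k : nat), 0 < c /\
  forall (S : nat) (p : 'I_S -> R) (pres : R) (lam : 'I_S -> R)
         (Delta beta omega eps rho Dt C eta alpha2 : R) (K2 : nat)
         (m : nat -> R) (L : nat),
    (* initial state: weights |c_s|^2 = p s, |c_res|^2 = pres *)
    (forall s, beta <= p s) -> 0 <= pres -> pres <= omega ->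
    \sum_(s < S) p s + pres = 1 ->
    0 < beta -> 0 < omega -> omega < beta ->
    (* eigenvalues in [0, 0.9] and gap *)
    (forall s, 0 <= lam s <= 9 / 10) ->
    is_gap lam Delta -> 0 < Delta ->
    (* accuracy, failure probability *)
    0 < eps -> eps < 2 * eta -> 0 < rho < 1 ->
    (* parameters *)
    0 < Dt < 1 / (8 * S%:R * (2 * S%:R - 1)) ->
    ~~ odd K2 -> 4 / Dt < K2%:R ->
    2 < C < K2%:R * Dt / 2 ->
    constA S beta C K2 * omega < eta < 1 / (8 * S%:R * (2 * S%:R - 1)) ->
    0 < alpha2 ->
    alpha2 < Num.min
               (C * beta / (8 * (C - 1) * Num.sqrt (2 * S%:R))
                  * Num.sqrt (1 - 2 * (C - 1) * S%:R / (C * K2%:R)))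
               (eta / constA S beta C K2) - omega ->
    (* "constant-order" quantities hidden in the O-constants *)
    K2%:R * Dt <= kappa -> omega <= kappa * alpha2 ->
    (* the refinement factors m_l in [2,4], and L the stopping level *)
    (forall l, (1 <= l)%N -> 2 <= m l <= 4) ->
    eta / Mlev m L <= eps -> (forall l, (l < L)%N -> eps < eta / Mlev m l) ->
    let Mt := Dt / Delta in
    let k1 := K1 eta beta omega in
    let n1 := NHR (alpha1 beta omega) rho eta eps k1 in
    let n2 := NHR alpha2 rho eta eps K2 in
    let polylog := (ln (2 + (rho^-1 + beta^-1 + omega^-1 + eta^-1 + eps^-1
                              + Dt^-1 + Delta^-1))) ^+ k in
    Tmax m Mt k1 K2 L
      <= c * Num.max (ln (2 / beta) * eta^-1 * Dt * Delta^-1)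
                     (eta * Dt^-1 * eps^-1)
    /\
    Ttotal m Mt k1 K2 n1 n2 L
      <= c * (eta ^- 2 * beta ^- 2 * Dt * Delta^-1
              + eta * omega ^- 2 * Dt ^- 2 * eps^-1) * polylog.
Proof.
pose c := 2 ^+ 25 + 2 ^+ 15 * kappa ^+ 5 + (32 + 4 * kappa).
have [c_gt0 c_Tmax c_Ttotal] :
    [/\ 0 < c, 32 + 4 * kappa <= c & 2 ^+ 25 + 2 ^+ 15 * kappa ^+ 5 <= c].
  by have := exprn_ge0 5 (le_trans ler01 hkappa); rewrite /c; split; lra.
exists c, 3%N; split => // S p pres lam Delta beta omega eps rho Dt C eta alpha2 K2 m L
  p_ge pres_ge0 _ p_sum beta_gt0 omega_gt0 _ _ _ Delta_gt0 eps_gt0 eps_lt /andP[rho_gt0 _]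
  /andP[Dt_gt0 Dt_lt] _ _ /andP[C_gt2 _] /andP[_ eta_lt] alpha2_gt0 alpha2_lt K2Dt_le
  omega_le m_range _ coarse Mt k1 n1 n2 polylog.
have S_gt0 : (0 < S)%N by apply: div_8S2S1_gt0; apply: lt_trans Dt_gt0 Dt_lt.
have p_ge0 s : 0 <= p s := le_trans (ltW beta_gt0) (p_ge s).
have beta_le1 := le_trans (p_ge (Ordinal S_gt0)) (weight_le1 _ p_ge0 pres_ge0 p_sum).
have eta_gt0 : 0 < eta by have := lt_trans eps_gt0 eps_lt; rewrite pmulr_rgt0.
have eta_lt8 := lt_le_trans eta_lt (div_8S2S1_le S).
have Dt_lt8 := lt_le_trans Dt_lt (div_8S2S1_le S).
have omega_lt := omega_lt_beta_quarter beta_gt0 C_gt2 alpha2_gt0 alpha2_lt.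
have K2_le : K2%:R <= kappa / Dt by rewrite ler_pdivlMr.
have alpha2_inv : alpha2^-1 <= kappa / omega by rewrite ler_pdivlMr // mulrC ler_pdivrMr.
have ML_le := Mlev_stop_le m_range eps_gt0 eps_lt coarse.
have [Y_ge2 [Y_rho Y_beta Y_eta Y_eps Y_Dt]] := inv_sum_bounds rho_gt0 beta_gt0 omega_gt0
  omega_lt eta_gt0 eps_gt0 Dt_gt0 Delta_gt0.
split.
  exact: Tmax_bound m_range ML_le beta_gt0 beta_le1 omega_gt0 omega_lt eta_gt0 eta_lt8
    eps_gt0 Dt_gt0 Delta_gt0 hkappa K2_le c_Tmax.
exact: Ttotal_bound m_range ML_le rho_gt0 beta_gt0 beta_le1 omega_gt0 omega_lt eta_gt0 eta_lt8
  eps_gt0 Dt_gt0 Dt_lt8 Delta_gt0 hkappa K2_le alpha2_gt0 alpha2_inv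
  Y_ge2 Y_rho Y_beta Y_eta Y_eps Y_Dt c_Ttotal.
Qed.
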